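(* For every $d=1,\dots,\mathbf d-1$ and all $m,n\in\mathcal M$, the function $y_d\mapsto\mathcal V^n_{d+1}(x,y_d,b^{mn}_{d+1})$ (with $x$ and $b^{mn}_{d+1}$ fixed) is convex.
   Context: Let $\mathbf d\ge2$, $\mathcal M$ a finite set of states, $\Omega$ a finite set of scenarios with $\pi^\omega=1/|\Omega|$; $\pi^{lm}_d\ge0$ with $\sum_m\pi^{lm}_d=1$. For each $d$: cost vector $c_d$, matrices $A_d,C_d$, a bilinear map $(x,b)\mapsto x^\top B_db$ into the right-hand-side space, and a set $\mathcal Y_d$, given by linear constraints (possibly linking scenarios), of decisions $y_d=(y^\omega_d)_{\omega\in\Omega}$. Data vectors $b^{lm\omega}_d$; write $b^{lm}_d=(b^{lm\omega}_d)_{\omega\in\Omega}$. Define $\mathcal V^m_{\mathbf d}(x,y_{\mathbf d-1},b^{lm}_{\mathbf d})=\min_{y_{\mathbf d}\in\mathcal Y_{\mathbf d}}\sum_\omega\pi^\omega c_{\mathbf d}^\top y^\omega_{\mathbf d}$ s.t. $A_{\mathbf d}y^\omega_{\mathbf d}\le x^\top B_{\mathbf d}b^{lm\omega}_{\mathbf d}+C_{\mathbf d}y_{\mathbf d-1}$ for all $\omega$, and for $2\le d\le\mathbf d-1$, $\mathcal V^m_d(x,y_{d-1},b^{lm}_d)=\min_{y_d\in\mathcal Y_d}\sum_\omega\pi^\omega\big(c_d^\top y^\omega_d+\sum_n\pi^{mn}_{d+1}\mathcal V^n_{d+1}(x,y^\omega_d,b^{mn}_{d+1})\big)$ s.t.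 $A_dy^\omega_d\le x^\top B_db^{lm\omega}_d+C_dy_{d-1}$ for all $\omega$ (the argument $y_{d-1}$ is a single-scenario vector). Standing assumption: relatively complete recourse (all these problems feasible with finite optimal value for all arguments considered). *)

From HB Require Import structures.
From mathcomp Require Import all_boot all_order all_algebra.
From mathcomp Require Import boolp classical_sets reals.
Unset Printing Implicit Defensive.
Import Order.TTheory GRing.Theory Num.Theory.
Local Open Scope ring_scope.
Local Open Scope classical_set_scope.

(* Stages are indexed by d : nat.
   - x lives in R^p (column vectors 'cV_p);
   - y^omega_d lives in R^(ny d);
   - right-hand sides of stage d live in R^(nr d);
   - data vectors b^{lm omega}_d live in R^(nb d);
   - Y_d is the polyhedron { y = (y^omega)_omega | \sum_omega G d omega *m y^omega <= h d }
     (nY d linear inequalities, possibly linking scenarios; equalities are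
     encoded as pairs of inequalities);
   - the bilinear map (x,b) |-> x^T B_d b has i-th component x^T (B d i) b;
   - ppi d l m = pi^{lm}_d ;  bdat d l m omega = b^{lm omega}_d. *)
Record msdata (R : realType) (M Omega : finType) := MSData {
  p : nat;
  ny : nat -> nat;
  nr : nat -> nat;
  nb : nat -> nat;
  nY : nat -> nat;
  cc : forall d, 'cV[R]_(ny d);
  AA : forall d, 'M[R]_(nr d, ny d);
  CC : forall d, 'M[R]_(nr d, ny d.-1);
  BB : forall d, 'I_(nr d) -> 'M[R]_(p, nb d);
  GG : forall d, Omega -> 'M[R]_(nY d, ny d);
  hh : forall d, 'cV[R]_(nY d);
  ppi : nat -> M -> M -> R;
  bdat : forall d, M -> M -> Omega -> 'cV[R]_(nb d)
}.

Arguments p {R M Omega} S : rename.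
Arguments ny {R M Omega} S d : rename.
Arguments nr {R M Omega} S d : rename.
Arguments nb {R M Omega} S d : rename.
Arguments nY {R M Omega} S d : rename.
Arguments cc {R M Omega} S d : rename.
Arguments AA {R M Omega} S d : rename.
Arguments CC {R M Omega} S d : rename.
Arguments BB {R M Omega} S d i : rename.
Arguments GG {R M Omega} S d w : rename.
Arguments hh {R M Omega} S d : rename.
Arguments ppi {R M Omega} S d l m : rename.
Arguments bdat {R M Omega} S d l m w : rename.

Definition mxle {R : realType} {m n} (u v : 'M[R]_(m, n)) : Prop :=
  forall i j, u i j <= v i j.

Section Defs.
Variables (R : realType) (M Omega : finType) (S : msdata R M Omega).

Definition bilin d (x : 'cV[R]_(p S)) (b : 'cV[R]_(nb S d)) : 'cV[R]_(nr S d) :=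
  \col_i ((x^T *m BB S d i *m b) 0 0).

Definition inY d (y : Omega -> 'cV[R]_(ny S d)) : Prop :=
  mxle (\sum_(w : Omega) GG S d w *m y w) (hh S d).

Definition feas d (x : 'cV[R]_(p S)) (yprev : 'cV[R]_(ny S d.-1))
  (b : Omega -> 'cV[R]_(nb S d)) : set (Omega -> 'cV[R]_(ny S d)) :=
  [set y | inY d y /\
     forall w, mxle (AA S d *m y w) (bilin d x (b w) + CC S d *m yprev)].

Definition piw : R := (#|Omega|%:R)^-1.

(* Vset k d m x yprev b = set of objective values of the stage-d problem
   for state m, when d is k stages before the last one. *)
Fixpoint Vset (k d : nat) (m : M) (x : 'cV[R]_(p S))
  (yprev : 'cV[R]_(ny S d.-1)) (b : Omega -> 'cV[R]_(nb S d)) {struct k}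
  : set R :=
  match k with
  | 0 => [set \sum_(w : Omega) piw * ((cc S d)^T *m y w) 0 0 | y in feas d x yprev b]
  | k'.+1 =>
      [set \sum_(w : Omega) piw * (((cc S d)^T *m y w) 0 0
            + \sum_(n : M) ppi S d.+1 m n
                * inf (Vset k' d.+1 n x (y w) (bdat S d.+1 m n)))
       | y in feas d x yprev b]
  end.

(* V^m_d(x, y_{d-1}, b) for the horizon D (= bold d), 2 <= d <= D *)
Definition V (D d : nat) (m : M) (x : 'cV[R]_(p S))
  (yprev : 'cV[R]_(ny S d.-1)) (b : Omega -> 'cV[R]_(nb S d)) : R :=
  inf (Vset (D - d) d m x yprev b).

End Defs.

Arguments bilin {R M Omega} S d x b.
Arguments inY {R M Omega} S d y.
Arguments feas {R M Omega} S d x yprev b.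
Arguments piw {R} Omega.
Arguments Vset {R M Omega} S k d m x yprev b.
Arguments V {R M Omega} S D d m x yprev b.

(** Backward induction on the stage.  Feasible sets are jointly convex in
    (y_{d-1}, y_d), because all constraints are linear in both; the stage
    objective is linear in y_d plus a nonnegative combination of next-stage
    values, which are convex by induction.  Minimising a jointly convex function
    over the y_d variable leaves a convex function of y_{d-1}. *)
From HB Require Import structures.
From mathcomp Require Import all_boot all_order all_algebra.
From mathcomp Require Import boolp classical_sets reals.
From mathcomp Require Import zify.
Import Order.TTheory GRing.Theory Num.Theory.
Local Open Scope ring_scope.
Local Open Scope classical_set_scope.

Lemma inf_image_le_convex_comb {R : realType} {T : Type} (f : T -> R)
    (comb : T -> T -> T) (F0 F1 F2 : set T) (t : R) :
  0 <= t <= 1 -> has_lbound (f @` F0) ->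
  f @` F1 !=set0 -> has_lbound (f @` F1) ->
  f @` F2 !=set0 -> has_lbound (f @` F2) ->
  (forall z1 z2, F1 z1 -> F2 z2 ->
     F0 (comb z1 z2) /\ f (comb z1 z2) <= t * f z1 + (1 - t) * f z2) ->
  inf (f @` F0) <= t * inf (f @` F1) + (1 - t) * inf (f @` F2).
Proof.
move=> /andP[t_ge0 t_le1] lb0 ne1 lb1 ne2 lb2 comb_le.
have t'_ge0 : 0 <= 1 - t by rewrite subr_ge0.
apply/ler_addgt0Pr => e e_gt0.
have [_ [z1 F1z1 <-] z1_lt] := inf_adherent e_gt0 (conj ne1 lb1).
have [_ [z2 F2z2 <-] z2_lt] := inf_adherent e_gt0 (conj ne2 lb2).
have [F0z fz_le] := comb_le _ _ F1z1 F2z2.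
apply: le_trans (ge_inf lb0 (imageP f F0z)) _; apply: le_trans fz_le _.
have -> : e = t * e + (1 - t) * e by rewrite -mulrDl subrKC mul1r.
rewrite addrACA -!mulrDr.
by apply: lerD; apply: ler_wpM2l => //; apply: ltW.
Qed.

Lemma mxle_convex_comb {R : realType} {m n} (u1 v1 u2 v2 : 'M[R]_(m, n)) (t : R) :
  0 <= t <= 1 -> mxle u1 v1 -> mxle u2 v2 ->
  mxle (t *: u1 + (1 - t) *: u2) (t *: v1 + (1 - t) *: v2).
Proof.
move=> /andP[t_ge0 t_le1] le1 le2 i j; rewrite !mxE.
have t'_ge0 : 0 <= 1 - t by rewrite subr_ge0.
by apply: lerD; apply: ler_wpM2l.
Qed.

Lemma scale_convex_comb_id {R : realType} {m n} (v : 'M[R]_(m, n)) (t : R) :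
  t *: v + (1 - t) *: v = v.
Proof. by rewrite -scalerDl subrKC scale1r. Qed.

Lemma feas_convex_comb {R : realType} {M Omega : finType}
    {S : msdata R M Omega} {d x b} {yp1 yp2 y1 y2} {t : R} :
  0 <= t <= 1 -> feas S d x yp1 b y1 -> feas S d x yp2 b y2 ->
  feas S d x (t *: yp1 + (1 - t) *: yp2) b (fun w => t *: y1 w + (1 - t) *: y2 w).
Proof.
move=> t01 [inY1 le1] [inY2 le2]; split.
  rewrite /inY -(scale_convex_comb_id (hh S d) t).
  have -> : \sum_w GG S d w *m (t *: y1 w + (1 - t) *: y2 w) =
      t *: (\sum_w GG S d w *m y1 w) + (1 - t) *: (\sum_w GG S d w *m y2 w).
    rewrite !scaler_sumr -big_split; apply: eq_bigr => w _.
    by rewrite mulmxDr !scalemxAr.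
  exact: mxle_convex_comb.
move=> w; rewrite mulmxDr -!scalemxAr.
rewrite -{1}(scale_convex_comb_id (bilin S d x (b w)) t).
rewrite mulmxDr -!scalemxAr addrACA -!scalerDr.
exact: mxle_convex_comb.
Qed.

Lemma sumr_convex_comb {R : realType} {I : finType} {a F G1 G2 : I -> R} {t : R} :
  (forall i, 0 <= a i) -> (forall i, F i <= t * G1 i + (1 - t) * G2 i) ->
  \sum_i a i * F i <= t * (\sum_i a i * G1 i) + (1 - t) * (\sum_i a i * G2 i).
Proof.
move=> a_ge0 F_le; rewrite !mulr_sumr -big_split; apply: ler_sum => i _ /=.
by rewrite mulrCA [(1 - t) * _]mulrCA -mulrDr ler_wpM2l.
Qed.

Lemma dot_convex_comb {R : realType} {n} (c z1 z2 : 'cV[R]_n) (t : R) :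
  (c^T *m (t *: z1 + (1 - t) *: z2)) 0 0 =
  t * (c^T *m z1) 0 0 + (1 - t) * (c^T *m z2) 0 0.
Proof. by rewrite mulmxDr -!scalemxAr !mxE. Qed.

Lemma piw_ge0 (R : realType) (Omega : finType) : 0 <= piw (R := R) Omega.
Proof. by rewrite invr_ge0 ler0n. Qed.

Section StageValueConvexity.

Context {R : realType} {M Omega : finType} {S : msdata R M Omega}.
Context {D : nat} {x : 'cV[R]_(p S)}.

Hypothesis ppi_ge0 : forall d l m, 0 <= ppi S d l m.
Hypothesis recourse : forall d, (2 <= d <= D)%N ->
  forall (l m : M) (yprev : 'cV[R]_(ny S d.-1)),
  Vset S (D - d) d m x yprev (bdat S d l m) !=set0 /\
  has_lbound (Vset S (D - d) d m x yprev (bdat S d l m)).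

Lemma Vset_inf_convex k d : (2 <= d <= D)%N -> (D - d)%N = k ->
  forall (l n : M) (y1 y2 : 'cV[R]_(ny S d.-1)) (t : R), 0 <= t <= 1 ->
  inf (Vset S k d n x (t *: y1 + (1 - t) *: y2) (bdat S d l n))
  <= t * inf (Vset S k d n x y1 (bdat S d l n))
     + (1 - t) * inf (Vset S k d n x y2 (bdat S d l n)).
Proof.
elim: k d => [|k IH] d d_range Dd l n y1 y2 t t01;
  have [ne1 lb1] := recourse _ d_range l n y1;
  have [ne2 lb2] := recourse _ d_range l n y2;
  have [_ lb0] := recourse _ d_range l n (t *: y1 + (1 - t) *: y2);
  rewrite Dd in ne1 lb1 ne2 lb2 lb0;
  apply: (inf_image_le_convex_comb _ (fun z1 z2 w => t *: z1 w + (1 - t) *: z2 w))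
    => // z1 z2 feas1 feas2;
  (split; first exact: feas_convex_comb);
  apply: sumr_convex_comb => [w|w]; rewrite ?piw_ge0 // dot_convex_comb //.
have d'_range : (2 <= d.+1 <= D)%N by lia.
have Dd' : (D - d.+1)%N = k by lia.
have next_le := sumr_convex_comb (ppi_ge0 d.+1 n)
  (fun m => IH d.+1 d'_range Dd' n m (z1 w) (z2 w) t t01).
by apply: le_trans (lerD (lexx _) next_le) _; rewrite !mulrDr addrACA.
Qed.

Lemma V_convex d : (2 <= d <= D)%N ->
  forall (l n : M) (y1 y2 : 'cV[R]_(ny S d.-1)) (t : R), 0 <= t <= 1 ->
  V S D d n x (t *: y1 + (1 - t) *: y2) (bdat S d l n)
  <= t * V S D d n x y1 (bdat S d l n) + (1 - t) * V S D d n x y2 (bdat S d l n).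
Proof. by move=> d_range; apply: Vset_inf_convex. Qed.

End StageValueConvexity.

Theorem lemma11 (R : realType) (M Omega : finType) (S : msdata R M Omega)
  (D : nat) (x : 'cV[R]_(p S)) :
  (2 <= D)%N ->
  (0 < #|Omega|)%N ->
  (forall d l m, 0 <= ppi S d l m) ->
  (forall d l, \sum_m ppi S d l m = 1) ->
  (* relatively complete recourse: every stage problem is feasible with
     finite optimal value *)
  (forall d, (2 <= d <= D)%N -> forall (l m : M) (yprev : 'cV[R]_(ny S d.-1)),
     Vset S (D - d) d m x yprev (bdat S d l m) !=set0 /\
     has_lbound (Vset S (D - d) d m x yprev (bdat S d l m))) ->
  forall d, (1 <= d <= D - 1)%N -> forall m n : M,
  forall (y1 y2 : 'cV[R]_(ny S d)) (t : R), 0 <= t <= 1 ->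
    V S D d.+1 n x (t *: y1 + (1 - t) *: y2) (bdat S d.+1 m n)
    <= t * V S D d.+1 n x y1 (bdat S d.+1 m n)
       + (1 - t) * V S D d.+1 n x y2 (bdat S d.+1 m n).
Proof.
move=> D_ge2 _ ppi_ge0 _ recourse d d_range m n.
have d'_range : (2 <= d.+1 <= D)%N by lia.
exact: V_convex ppi_ge0 recourse _ d'_range m n.
Qed.
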